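(* Let $X=\mathbb{P}^{n_1}\times\dots\times\mathbb{P}^{n_\ell}$ over an algebraically closed field $k$ of characteristic zero with $\ell\ge3$ (and all $n_i\geq 1$). Then the ample line bundle $\mathcal{O}_X(1,1,\dots,1)$ is not determinantally presented.
   Context: $\mathcal{O}_X(\mathbf{m})$ denotes $\mathcal{O}_{\mathbb{P}^{n_1}}(m_1)\boxtimes\cdots\boxtimes\mathcal{O}_{\mathbb{P}^{n_\ell}}(m_\ell)$. A matrix of linear forms $\Omega$ is $1$-generic if $P\Omega Q$ has no zero entry for all invertible $P,Q$ over $k$. A line bundle $L$ is determinantally presented if its complete linear series embeds $X$ in $\mathbb{P}(H^0(X,L))$ and the homogeneous ideal of $X$ there is generated by the $2\times2$ minors of a $1$-generic matrix of linear forms. *)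

From HB Require Import structures.
From mathcomp Require Import all_boot all_algebra.
From mathcomp Require Import mpoly.
Set Implicit Arguments. Unset Strict Implicit. Unset Printing Implicit Defensive.
Import GRing.Theory.
Local Open Scope ring_scope.

(* X = P^{n_0} x ... x P^{n_{l-1}}, indices i : 'I_l.
   A basis of H^0(X, O(1,...,1)) = k^{n_0+1} (x) ... (x) k^{n_{l-1}+1}
   is indexed by multi-indices e : forall i, 'I_(n i).+1. *)
Definition multiidx (l : nat) (n : 'I_l -> nat) : finType :=
  {dffun forall i : 'I_l, 'I_(n i).+1}.

Definition ncoord (l : nat) (n : 'I_l -> nat) : nat := #|multiidx n|.

(* the complete linear series of O(1,...,1): the Segre map on affine cones,
   sending (v_0, ..., v_{l-1}) to the tensor v_0 (x) ... (x) v_{l-1}. *)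
Definition segre (k : fieldType) (l : nat) (n : 'I_l -> nat)
  (v : forall i : 'I_l, 'I_(n i).+1 -> k) : 'I_(ncoord n) -> k :=
  fun j => \prod_(i < l) v i ((@enum_val (multiidx n) predT j) i).

(* homogeneous ideal of the image of X in P(H^0(X,L)): since k is infinite,
   f lies in it iff f vanishes on the affine cone over X. *)
Definition in_segre_ideal (k : fieldType) (l : nat) (n : 'I_l -> nat)
  (f : {mpoly k[ncoord n]}) : Prop :=
  forall v : forall i : 'I_l, 'I_(n i).+1 -> k, f.@[segre v] = 0.

Definition minor2 (R : comRingType) (a b : nat) (Om : 'M[R]_(a, b))
  (i1 i2 : 'I_a) (j1 j2 : 'I_b) : R :=
  Om i1 j1 * Om i2 j2 - Om i1 j2 * Om i2 j1.

Definition in_minor_ideal (R : comRingType) (a b : nat) (Om : 'M[R]_(a, b))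
  (f : R) : Prop :=
  exists c : 'I_a -> 'I_a -> 'I_b -> 'I_b -> R,
    f = \sum_(i1 < a) \sum_(i2 < a) \sum_(j1 < b) \sum_(j2 < b)
          c i1 i2 j1 j2 * minor2 Om i1 i2 j1 j2.

Definition linear_forms_mx (k : fieldType) (N a b : nat)
  (Om : 'M[{mpoly k[N]}]_(a, b)) : Prop :=
  forall i j, Om i j \is 1.-homog.

Definition one_generic (k : fieldType) (N a b : nat)
  (Om : 'M[{mpoly k[N]}]_(a, b)) : Prop :=
  forall (P : 'M[k]_a) (Q : 'M[k]_b), P \in unitmx -> Q \in unitmx ->
    forall i j,
      (map_mx (fun x => x%:MP) P *m Om *m map_mx (fun x => x%:MP) Q) i j != 0.

Definition O1_det_presented (k : fieldType) (l : nat) (n : 'I_l -> nat) : Prop :=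
  exists (a b : nat) (Om : 'M[{mpoly k[ncoord n]}]_(a, b)),
    linear_forms_mx Om /\ one_generic Om /\
    (forall f, in_segre_ideal f <-> in_minor_ideal Om f).

From mathcomp Require Import all_boot all_algebra.
From mathcomp Require Import mpoly.
From mathcomp Require Import ring.
Set Implicit Arguments. Unset Strict Implicit. Unset Printing Implicit Defensive.
Import GRing.Theory.
Local Open Scope ring_scope.

(* Suppose the ideal of the Segre embedding of X is generated by the 2x2
   minors of a matrix Om of linear forms.  Evaluating Om at a point T gives a
   matrix Om(T) of rank <= 1 when T lies on X, and the whole ideal vanishes at
   T as soon as Om(T) has rank <= 1.  For a set S of factors let E_S be the
   coordinate point with multi-index 1 on S and 0 elsewhere, and M_S = Om(E_S).
   The quadric X_0 X_pq - X_p X_q lies in the ideal but is 1 at E_0 + E_pq, so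
   M_0 + M_pq has rank 2.  Since Om is linear, the points
   (e0 + s e1) x (e0 + t e1) x e0 x ... x e0 of X show that M_0 + M_p and
   M_0 + M_pq +- (M_p + M_q) have rank <= 1; the 2x2 minor being a quadratic
   form, the parallelogram law (char <> 2) then forces M_p + M_q to have rank 2
   for p <> q.  But M_0 = u w^T <> 0 and M_0 + M_p of rank <= 1 force M_p to
   share the column u or the row w of M_0; among three factors two M_p share
   the same side, and then their sum has rank <= 1. *)

Section RankOne.
Variable K : fieldType.

Definition wedge m (u v : 'I_m -> K) i j := u i * v j - u j * v i.

Definition colinear m (u v : 'I_m -> K) := forall i j, wedge u v i j = 0.

Lemma colinear_trans m (u v w : 'I_m -> K) c :
  u c != 0 -> colinear u v -> colinear u w -> colinear v w.
Proof.
move=> uc0 uv uw i j; apply: (mulIf (mulf_neq0 uc0 uc0)); rewrite mul0r.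
have prop_u x (y : 'I_m -> K) : colinear u y -> y x * u c = y c * u x.
  by move=> uy; apply/eqP; rewrite -subr_eq0 -(uy c x) /wedge; apply/eqP; ring.
transitivity (v i * u c * (w j * u c) - v j * u c * (w i * u c)).
  by rewrite /wedge; ring.
by rewrite !(prop_u _ _ uv) !(prop_u _ _ uw); ring.
Qed.

Lemma mulf_eq0_all (I J : finType) (x : I -> K) (y : J -> K) :
  (forall i j, x i * y j = 0) -> (forall i, x i = 0) \/ (forall j, y j = 0).
Proof.
move=> xy0; have [i xi0|x0] := pickP (fun i => x i != 0).
  by right=> j; have /eqP := xy0 i j; rewrite mulf_eq0 (negbTE xi0) => /eqP.
by left=> i; apply/eqP/negbFE/x0.
Qed.

Variables a b : nat.

Definition rank_le1 (A : 'M[K]_(a, b)) :=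
  forall i1 i2 j1 j2, minor2 A i1 i2 j1 j2 = 0.

Definition outer (u : 'I_a -> K) (w : 'I_b -> K) : 'M[K]_(a, b) :=
  \matrix_(i, j) (u i * w j).

Lemma rank_le1_outer A : rank_le1 A -> exists u w, A = outer u w.
Proof.
move=> A1; have [A0|/matrix0Pn [r [c Arc]]] := eqVneq A 0.
  by exists (fun=> 0), (fun=> 0); apply/matrixP => i j; rewrite A0 !mxE mul0r.
exists (fun i => A i c), (fun j => A r j / A r c); apply/matrixP => i j.
rewrite mxE mulrA -(mulfK Arc (A i j)); congr (_ / _); apply/eqP.
by rewrite -subr_eq0 -(A1 i r j c).
Qed.

Lemma minor2_outerD u w u' w' i1 i2 j1 j2 :
  minor2 (outer u w + outer u' w') i1 i2 j1 j2
  = wedge u u' i1 i2 * wedge w w' j1 j2.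
Proof. by rewrite /minor2 /wedge !mxE; ring. Qed.

Lemma rank_le1_outerDP u w u' w' :
  rank_le1 (outer u w + outer u' w') <-> colinear u u' \/ colinear w w'.
Proof.
split=> [uw1|[uu'|ww'] i1 i2 j1 j2]; last 2 first.
- by rewrite minor2_outerD uu' mul0r.
- by rewrite minor2_outerD ww' mulr0.
have /mulf_eq0_all [uu'|ww'] :
    forall (i : 'I_a * 'I_a) (j : 'I_b * 'I_b),
      wedge u u' i.1 i.2 * wedge w w' j.1 j.2 = 0.
  by move=> i j; rewrite -minor2_outerD.
- by left=> i1 i2; exact: uu' (i1, i2).
- by right=> j1 j2; exact: ww' (j1, j2).
Qed.

Lemma rank_le1_parallelogram X Y : (2 : K) != 0 ->
  rank_le1 Y -> rank_le1 (X + Y) -> rank_le1 (X - Y) -> rank_le1 X.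
Proof.
move=> two_neq0 Y1 XDY1 XBY1 i1 i2 j1 j2; apply: (mulfI two_neq0).
have -> : 2 * minor2 X i1 i2 j1 j2 = minor2 (X + Y) i1 i2 j1 j2
    + minor2 (X - Y) i1 i2 j1 j2 - 2 * minor2 Y i1 i2 j1 j2.
  by rewrite /minor2 !mxE; ring.
by rewrite XDY1 XBY1 Y1 !mulr0 addr0 subr0.
Qed.

Lemma rank_le1_two_of_three A X1 X2 X3 : A != 0 -> rank_le1 A ->
  rank_le1 X1 -> rank_le1 X2 -> rank_le1 X3 ->
  rank_le1 (A + X1) -> rank_le1 (A + X2) -> rank_le1 (A + X3) ->
  [\/ rank_le1 (X1 + X2), rank_le1 (X1 + X3) | rank_le1 (X2 + X3)].
Proof.
move=> /matrix0Pn [r [c Arc]] /rank_le1_outer [u [w defA]].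
have /andP [ur0 wc0] : (u r != 0) && (w c != 0).
  by move: Arc; rewrite defA mxE mulf_eq0 negb_or.
have side X : rank_le1 X -> rank_le1 (A + X) ->
    exists u' w', X = outer u' w' /\ (colinear u u' \/ colinear w w').
  by move=> /rank_le1_outer [u' [w' ->]]; rewrite defA => /rank_le1_outerDP;
     exists u', w'.
have same_side u1 w1 u2 w2 :
    (colinear u u1 /\ colinear u u2) \/ (colinear w w1 /\ colinear w w2) ->
    rank_le1 (outer u1 w1 + outer u2 w2).
  case=> [[uu1 uu2]|[ww1 ww2]]; apply/rank_le1_outerDP.
    by left; exact: colinear_trans ur0 uu1 uu2.
  by right; exact: colinear_trans wc0 ww1 ww2.
move=> X1r X2r X3r /(side _ X1r) [u1 [w1 [-> s1]]]
  /(side _ X2r) [u2 [w2 [-> s2]]] /(side _ X3r) [u3 [w3 [-> s3]]].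
by case: s1 s2 s3 => s1 [] s2 [] s3;
  solve [apply: Or31; apply: same_side; by [left | right]
        | apply: Or32; apply: same_side; by [left | right]
        | apply: Or33; apply: same_side; by [left | right]].
Qed.

End RankOne.

Lemma meval_homog1_lin (R : comNzRingType) N (p : {mpoly R[N]}) x y c :
  p \is 1.-homog -> p.@[fun j => x j + c * y j] = p.@[x] + c * p.@[y].
Proof.
move=> p1; rewrite !mevalE big_distrr -big_split /=.
apply: eq_big_seq => m /(dhomog_mf p1) /eqP /mdeg1P [i /eqP ->].
by rewrite -!mevalX !mevalXU; ring.
Qed.

Lemma rmorph_minor2 (R S : comNzRingType) (f : {rmorphism R -> S}) a b
    (A : 'M[R]_(a, b)) i1 i2 j1 j2 :
  minor2 (map_mx f A) i1 i2 j1 j2 = f (minor2 A i1 i2 j1 j2).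
Proof. by rewrite /minor2 !mxE rmorphB !rmorphM. Qed.

Lemma minor2_in_minor_ideal (R : comNzRingType) a b (A : 'M[R]_(a, b))
    r1 r2 c1 c2 :
  in_minor_ideal A (minor2 A r1 r2 c1 c2).
Proof.
exists (fun i1 i2 j1 j2 => [&& i1 == r1, i2 == r2, j1 == c1 & j2 == c2]%:R).
rewrite (bigD1 r1) //= [X in _ + X]big1 ?addr0 => [|i1 /negbTE ->]; last first.
  by do 3!(apply: big1 => ? _); rewrite ?eqxx /= mul0r.
rewrite (bigD1 r2) //= [X in _ + X]big1 ?addr0 => [|i2 /negbTE ->]; last first.
  by do 2!(apply: big1 => ? _); rewrite ?eqxx /= mul0r.
rewrite (bigD1 c1) //= [X in _ + X]big1 ?addr0 => [|j1 /negbTE ->]; last first.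
  by apply: big1 => ? _; rewrite ?eqxx /= mul0r.
rewrite (bigD1 c2) //= [X in _ + X]big1 ?addr0 => [|j2 /negbTE ->]; last first.
  by rewrite ?eqxx /= mul0r.
by rewrite !eqxx mul1r.
Qed.

Lemma rmorph_minor_ideal_eq0 (R : comNzRingType) (K : fieldType)
    (f : {rmorphism R -> K}) a b (A : 'M[R]_(a, b)) g :
  rank_le1 (map_mx f A) -> in_minor_ideal A g -> f g = 0.
Proof.
move=> fA1 [c ->].
rewrite rmorph_sum big1 // => i1 _; rewrite rmorph_sum big1 // => i2 _.
rewrite rmorph_sum big1 // => j1 _; rewrite rmorph_sum big1 // => j2 _.
by rewrite rmorphM -rmorph_minor2 fA1 mulr0.
Qed.

Lemma bigD2 (R : Type) (idx : R) (op : Monoid.com_law idx) (I : finType)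
    (F : I -> R) p q : p != q ->
  \big[op/idx]_i F i
  = op (op (F p) (F q)) (\big[op/idx]_(i | (i != p) && (i != q)) F i).
Proof.
move=> pq; rewrite (bigD1 p) //= (bigD1 q) 1?eq_sym //=.
by rewrite Monoid.mulmA.
Qed.

Section Segre.
Variables (k : fieldType) (l : nat) (n : 'I_l -> nat).
Hypothesis n_gt0 : forall i, (0 < n i)%N.

Local Notation family := (forall i : 'I_l, 'I_(n i).+1 -> k).

Definition idx1 i : 'I_(n i).+1 := inord 1.

Lemma idx1_neq0 i : idx1 i != ord0.
Proof. by rewrite -val_eqE /= inordK // ltnS. Qed.

Definition indicator_idx (S : {set 'I_l}) : multiidx n :=
  finfun (fun i => (if i \in S then idx1 i else ord0) : 'I_(n i).+1).

Definition coord S : 'I_(ncoord n) := enum_rank (indicator_idx S).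

Lemma segre_coord (v : family) S :
  segre v (coord S) = \prod_i v i (indicator_idx S i).
Proof. by rewrite /segre /coord enum_rankK. Qed.

Definition coord_family S : family :=
  fun i x => (x == indicator_idx S i)%:R.

Lemma segre_coord_family S T : segre (coord_family S) (coord T) = (S == T)%:R.
Proof.
rewrite segre_coord; have [<-|neST] := eqVneq S T.
  by rewrite big1 // => i _; rewrite /coord_family eqxx.
have /existsP [i Si_Ti] : [exists i, (i \in S) != (i \in T)].
  by apply: contraNT neST => /existsPn ST; apply/eqP/setP => i; exact/eqP/negPn.
rewrite (bigD1 i) //= /coord_family !ffunE.
by move: Si_Ti; case: (i \in S); case: (i \in T);
   rewrite //= ?(eq_sym ord0) (negbTE (idx1_neq0 i)) mul0r.
Qed.

Definition face_family p q (s t : k) : family := fun i x =>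
  if i == p then (x == ord0)%:R + s * (x == idx1 i)%:R
  else if i == q then (x == ord0)%:R + t * (x == idx1 i)%:R
  else (x == ord0)%:R.

Lemma segre_face_family p q s t j : p != q ->
  segre (face_family p q s t) j
  = segre (coord_family set0) j + s * segre (coord_family [set p]) j
    + t * segre (coord_family [set q]) j
    + s * t * segre (coord_family [set p; q]) j.
Proof.
move=> pq; have qp := pq; rewrite eq_sym in qp.
rewrite /segre; set m := enum_val j; rewrite !(bigD2 _ _ pq).
pose e0 i x := (x == ord0 :> 'I_(n i).+1)%:R : k.
have rest (v : family) : (forall i, i != p -> i != q -> v i =1 e0 i) ->
    \prod_(i | (i != p) && (i != q)) v i (m i)
    = \prod_(i | (i != p) && (i != q)) e0 i (m i).
  by move=> v0; apply: eq_bigr => i /andP [ip iq]; rewrite v0.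
rewrite !rest; first by rewrite /face_family /coord_family !ffunE !inE !eqxx
  (negbTE pq) (negbTE qp) /=; ring.
all: move=> i ip iq x; rewrite /face_family /coord_family ?ffunE ?inE.
all: by rewrite ?(negbTE ip) ?(negbTE iq).
Qed.

Definition segre_pt (v : family) : 'rV[k]_(ncoord n) := \row_j segre v j.

Lemma segre_pt_face p q s t : p != q ->
  segre_pt (face_family p q s t)
  = segre_pt (coord_family set0) + s *: segre_pt (coord_family [set p])
    + t *: segre_pt (coord_family [set q])
    + (s * t) *: segre_pt (coord_family [set p; q]).
Proof. by move=> pq; apply/rowP => j; rewrite !mxE segre_face_family. Qed.

Definition segre_quad p q : {mpoly k[ncoord n]} :=
  'X_(coord set0) * 'X_(coord [set p; q]) - 'X_(coord [set p]) * 'X_(coord [set q]).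

Lemma segre_quad_segre p q v : p != q -> (segre_quad p q).@[segre v] = 0.
Proof.
move=> pq; have qp := pq; rewrite eq_sym in qp.
rewrite /segre_quad mevalB !mevalM !mevalXU !segre_coord !(bigD2 _ _ pq).
have rest (S : {set 'I_l}) : (forall i, i != p -> i != q -> i \notin S) ->
    \prod_(i | (i != p) && (i != q)) v i (indicator_idx S i)
    = \prod_(i | (i != p) && (i != q)) v i ord0.
  by move=> S0; apply: eq_bigr => i /andP [ip iq]; rewrite ffunE (negbTE (S0 _ ip iq)).
rewrite !rest; first by rewrite !ffunE !inE !eqxx (negbTE pq) (negbTE qp) /=; ring.
all: by move=> i ip iq; rewrite !inE ?(negbTE ip) ?(negbTE iq).
Qed.

Lemma segre_quad_coord p q : p != q ->
  (segre_quad p q).@[(segre_pt (coord_family set0)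
                      + segre_pt (coord_family [set p; q])) ord0] = 1.
Proof.
move=> pq; have qp := pq; rewrite eq_sym in qp.
have neq (S T : {set 'I_l}) x : (x \in S) != (x \in T) -> (S == T) = false.
  by move=> ST; apply/negbTE; apply: contraNneq ST => ->.
have pq0 : ([set p; q] == set0) = false by apply: (neq _ _ p); rewrite !inE eqxx.
have p0 : (set0 == [set p]) = false by apply: (neq _ _ p); rewrite !inE eqxx.
have q0 : (set0 == [set q]) = false by apply: (neq _ _ q); rewrite !inE eqxx.
have pqp : ([set p; q] == [set p]) = false.
  by apply: (neq _ _ q); rewrite !inE eqxx (negbTE qp).
have pqq : ([set p; q] == [set q]) = false.
  by apply: (neq _ _ p); rewrite !inE eqxx (negbTE pq).
rewrite /segre_quad mevalB !mevalM !mevalXU !mxE !segre_coord_family.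
by rewrite !eqxx (eq_sym set0) pq0 p0 q0 pqp pqq /=; ring.
Qed.

Variables (a b : nat) (Om : 'M[{mpoly k[ncoord n]}]_(a, b)).
Hypothesis Om_linear : linear_forms_mx Om.
Hypothesis segre_idealE : forall f, in_segre_ideal f <-> in_minor_ideal Om f.

Definition Om_at (T : 'rV[k]_(ncoord n)) : 'M[k]_(a, b) := map_mx (meval (T ord0)) Om.

Local Notation M S := (Om_at (segre_pt (coord_family S))).

Lemma Om_at_lin x y c : Om_at (x + c *: y) = Om_at x + c *: Om_at y.
Proof.
apply/matrixP => i j; rewrite !mxE -meval_homog1_lin //.
by apply: meval_eq => j'; rewrite !mxE.
Qed.

Lemma Om_atD x y : Om_at (x + y) = Om_at x + Om_at y.
Proof. by have := Om_at_lin x y 1; rewrite !scale1r. Qed.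

Lemma rank_le1_minor_ideal_eq0 T f :
  rank_le1 (Om_at T) -> in_minor_ideal Om f -> f.@[T ord0] = 0.
Proof. exact: rmorph_minor_ideal_eq0. Qed.

Lemma rank_le1_segre_pt v : rank_le1 (Om_at (segre_pt v)).
Proof.
move=> i1 i2 j1 j2; rewrite rmorph_minor2 /= (@meval_eq _ _ _ (segre v)).
  exact: (segre_idealE _).2 (minor2_in_minor_ideal _ _ _ _ _) v.
by move=> j; rewrite mxE.
Qed.

Lemma rank_le1_face p q s t : p != q ->
  rank_le1 (M set0 + s *: M [set p] + t *: M [set q] + (s * t) *: M [set p; q]).
Proof. by move=> pq; rewrite -!Om_at_lin -segre_pt_face //; exact: rank_le1_segre_pt. Qed.

Lemma rank_le1_pencil p q : p != q -> rank_le1 (M set0 + M [set p]).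
Proof.
by move=> pq; have := rank_le1_face 1 0 pq; rewrite mulr0 !scale0r !addr0 scale1r.
Qed.

Lemma not_rank_le1_quad p q : p != q -> ~ rank_le1 (M set0 + M [set p; q]).
Proof.
move=> pq MM1; have := segre_quad_coord pq.
rewrite rank_le1_minor_ideal_eq0 ?Om_atD // => [/eqP|]; first by rewrite eq_sym oner_eq0.
by apply/segre_idealE => v; exact: segre_quad_segre.
Qed.

Lemma not_rank_le1_pair p q : (2 : k) != 0 -> p != q ->
  ~ rank_le1 (M [set p] + M [set q]).
Proof.
move=> two_neq0 pq MM1; apply: (not_rank_le1_quad pq).
have face s : s * s = 1 ->
    rank_le1 (M set0 + M [set p; q] + s *: (M [set p] + M [set q])).
  move=> ss1; have := rank_le1_face s s pq; rewrite ss1.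
  suff -> : M set0 + s *: M [set p] + s *: M [set q] + 1 *: M [set p; q]
          = M set0 + M [set p; q] + s *: (M [set p] + M [set q]) by [].
  by apply/matrixP => i j; rewrite !mxE; ring.
apply: (rank_le1_parallelogram two_neq0 MM1).
  by rewrite -[M [set p] + _]scale1r; apply: face; rewrite mulr1.
by rewrite -scaleN1r; apply: face; rewrite mulrNN mulr1.
Qed.

Lemma segre_not_minor_presented : (2 : k) != 0 -> (2 < l)%N -> False.
Proof.
move=> two_neq0 l_gt2.
pose p0 : 'I_l := Ordinal (ltn_trans (isT : (0 < 2)%N) l_gt2).
pose p1 : 'I_l := Ordinal (ltn_trans (isT : (1 < 2)%N) l_gt2).
pose p2 : 'I_l := Ordinal l_gt2.
have M0_neq0 : M set0 != 0.
  apply/eqP => M00; apply: (@not_rank_le1_quad p0 p1) => //.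
  by rewrite M00 add0r; exact: rank_le1_segre_pt.
have := rank_le1_two_of_three M0_neq0 (rank_le1_segre_pt _)
  (rank_le1_segre_pt _) (rank_le1_segre_pt _) (rank_le1_segre_pt _)
  (@rank_le1_pencil p0 p1 isT) (@rank_le1_pencil p1 p0 isT) (@rank_le1_pencil p2 p0 isT).
by case=> /not_rank_le1_pair; apply.
Qed.

End Segre.

Theorem proposition4p2 (k : closedFieldType) (l : nat) (n : 'I_l -> nat) :
  [pchar k] =i pred0 -> (3 <= l)%N -> (forall i, (1 <= n i)%N) ->
  ~ O1_det_presented k n.
Proof.
move=> char0 l_gt2 n_gt0 [a [b [Om [Om_linear [_ Om_presents]]]]].
apply: (segre_not_minor_presented n_gt0 Om_linear Om_presents _ l_gt2).
by rewrite ((pcharf0P k).1 char0 2).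
Qed.
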